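(* Let $(A,[\cdot,\cdot])$ be an Acaa-algebra over a field $\mathbb K$ of characteristic $0$. For every $X\in A$, the linear map $\mathrm{ad}\,X:A\to A$, $Y\mapsto[X,Y]$, is a weighted anti-derivation of weight $2$, i.e. $2\,\mathrm{ad}\,X([Y,Z])=-[Y,\mathrm{ad}\,X(Z)]-[\mathrm{ad}\,X(Y),Z]$ for all $Y,Z\in A$.
   Context: An Acaa-algebra over a field $\mathbb K$ of characteristic $0$ is a $\mathbb K$-vector space $A$ with a bilinear product $[\cdot,\cdot]$ which is anticommutative, $[x,y]=-[y,x]$, and satisfies $[x_1,[x_2,x_3]]=[x_2,[x_3,x_1]]$ for all $x_1,x_2,x_3\in A$. For an algebra $B$ and $k\in\mathbb N^*$, a linear map $f\in\mathrm{End}(B)$ is a weighted anti-derivation of weight $k$ if $k f(xy)=-x f(y)-f(x)y$ for all $x,y\in B$. *)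

From mathcomp Require Import all_boot all_order all_algebra.
Set Implicit Arguments. Unset Strict Implicit. Unset Printing Implicit Defensive.
Import GRing.Theory.
Local Open Scope ring_scope.

Definition bilinear_prod (K : fieldType) (A : lmodType K) (br : A -> A -> A) :=
  (forall x, linear (br x)) /\ (forall y, linear (br^~ y)).

Definition is_Acaa (K : fieldType) (A : lmodType K) (br : A -> A -> A) :=
  [/\ bilinear_prod br,
      (forall x y, br x y = - br y x) &
      (forall x1 x2 x3, br x1 (br x2 x3) = br x2 (br x3 x1))].

Definition weighted_anti_derivation (K : fieldType) (B : lmodType K)
    (br : B -> B -> B) (k : nat) (f : B -> B) :=
  [/\ (0 < k)%N, linear f &
      forall x y, k%:R *: f (br x y) = - br x (f y) - br (f x) y].

From mathcomp Require Import all_boot all_order all_algebra.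
Local Open Scope ring_scope.
Import GRing.Theory.

(* Anticommutativity and the cyclic identity move [X] to the outside of both
   double brackets [Y (X Z)] and [(X Y) Z], each time with a sign change; so
   [-[Y, ad X Z] - [ad X Y, Z] = 2 [X, [Y, Z]]. *)

Section AcaaBracket.

Variables (K : fieldType) (A : lmodType K) (br : A -> A -> A).
Hypothesis br_linear : forall x, linear (br x).
Hypothesis br_anticomm : forall x y, br x y = - br y x.
Hypothesis br_cyclic : forall x y z, br x (br y z) = br y (br z x).

Lemma br_brl (x y z : A) : br (br x y) z = - br x (br y z).
Proof. by rewrite br_anticomm br_cyclic. Qed.

Lemma br_brr_swap (x y z : A) : br y (br x z) = - br x (br y z).
Proof.
by rewrite br_cyclic (br_anticomm z) -scaleN1r (scalable_linear (br_linear x)) /=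
  scaleN1r.
Qed.

Lemma br_ad_anti_derivation (x y z : A) :
  2%:R *: br x (br y z) = - br y (br x z) - br (br x y) z.
Proof. by rewrite br_brl br_brr_swap !opprK scaler_nat mulr2n. Qed.

End AcaaBracket.

Theorem mainTheorem8 (K : fieldType) (A : lmodType K) (br : A -> A -> A) :
  [pchar K] =i pred0 ->
  is_Acaa br ->
  forall X : A, weighted_anti_derivation br 2 (br X).
Proof.
move=> _ [[br_linear _] br_anticomm br_cyclic] X.
split=> //.
exact: (@br_ad_anti_derivation _ _ _ br_linear br_anticomm br_cyclic).
Qed.
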